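(* Let $(B,+)$ be an abelian group and let $\lambda\colon(B,+)\to\operatorname{Aut}(B,+)$, $x\mapsto\lambda_x$, be a group homomorphism such that $\lambda_{\lambda_y(x)}=\lambda_x$ for all $x,y\in B$. Define a product on $B$ by $xy=x+\lambda_x(y)$ for $x,y\in B$. Then $(B,+,\cdot)$ is a left brace with $B^{(3)}=\{0\}$.
   Context: A left brace $(A,+,\cdot)$ is a set $A$ with two binary operations such that $(A,+)$ is an abelian group, $(A,\cdot)$ is a group, and $a(b+c)=ab-a+ac$ for all $a,b,c\in A$. In a left brace, $a*b=-a+ab-b$. For subsets $L,M\subseteq A$, $L*M$ is the subgroup of $(A,+)$ generated by $\{l*m\mid l\in L,m\in M\}$. Set $A^{(1)}=A$ and $A^{(r+1)}=A^{(r)}*A$ for $r\ge1$. *)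

From HB Require Import structures.
From mathcomp Require Import all_boot all_order all_algebra.
Set Implicit Arguments. Unset Strict Implicit. Unset Printing Implicit Defensive.
Import GRing.Theory.
Local Open Scope ring_scope.

Definition is_group_op (B : Type) (mul : B -> B -> B) : Prop :=
  associative mul /\
  exists e : B, left_id e mul /\ right_id e mul /\
    forall a : B, exists b : B, mul a b = e /\ mul b a = e.

Definition left_brace (B : zmodType) (mul : B -> B -> B) : Prop :=
  is_group_op mul /\
  forall a b c : B, mul a (b + c) = mul a b - a + mul a c.

Definition brace_star (B : zmodType) (mul : B -> B -> B) (a b : B) : B :=
  - a + mul a b - b.

Inductive add_span (B : zmodType) (S : B -> Prop) : B -> Prop :=
  | add_span_in : forall x, S x -> add_span S x
  | add_span_0 : add_span S 0
  | add_span_sub : forall x y, add_span S x -> add_span S y -> add_span S (x - y).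

Definition star_set (B : zmodType) (mul : B -> B -> B) (L M : B -> Prop) : B -> Prop :=
  add_span (fun z => exists l m, L l /\ M m /\ z = brace_star mul l m).

(* brace_series mul r = A^(r+1) *)
Fixpoint brace_series (B : zmodType) (mul : B -> B -> B) (r : nat) : B -> Prop :=
  match r with
  | 0 => fun _ => True
  | r'.+1 => star_set mul (brace_series mul r') (fun _ => True)
  end.

(* A^(r) for r >= 1, as in the paper *)
Definition brace_pow (B : zmodType) (mul : B -> B -> B) (r : nat) : B -> Prop :=
  brace_series mul r.-1.

From mathcomp Require Import all_boot all_order all_algebra.
Import GRing.Theory.
Local Open Scope ring_scope.

(* The group axioms for the product and
   the brace identity a(b + c) = ab - a + ac follow by direct computation;
   associativity is exactly where lam_(lam_x y) = lam_y is used.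

   For the nilpotency, note that a * b = lam_a b - b, and
   lam_(lam_a b - b) = lam_(lam_a b) o lam_(-b) = lam_b o lam_(-b) = id.
   Hence every generator of B^(2) lies in the kernel of lam, which is an
   additive subgroup, so lam is trivial on all of B^(2).  Consequently
   l * m = lam_l m - m = 0 for l in B^(2), so B^(3) = B^(2) * B, the subgroup
   generated by these elements, is {0}. *)

Lemma add_span_min (B : zmodType) (S T : B -> Prop) :
  T 0 -> (forall x y, T x -> T y -> T (x - y)) ->
  (forall x, S x -> T x) -> forall x, add_span S x -> T x.
Proof.
move=> T0 TB ST x; elim=> [y /ST //| // | y z _ Ty _ Tz]; exact: TB.
Qed.

Section LambdaBrace.

Variables (B : zmodType) (lam : B -> B -> B).
Hypothesis lam_add : forall x y z : B, lam x (y + z) = lam x y + lam x z.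
Hypothesis lam_bij : forall x : B, bijective (lam x).
Hypothesis lam_hom : forall x y z : B, lam (x + y) z = lam x (lam y z).
Hypothesis lam_cond : forall x y : B, lam (lam y x) = lam x.

Definition lam_mul (x y : B) : B := x + lam x y.

(* A homomorphism into Aut(B) sends 0 to the identity: lam_0 is an injective
   idempotent. *)
Lemma lam0 (z : B) : lam 0 z = z.
Proof.
case: (lam_bij 0) => g gK _.
by rewrite -[RHS]gK -[in RHS](addr0 0) lam_hom gK.
Qed.

Lemma lamx0 (x : B) : lam x 0 = 0.
Proof. by apply: (addrI (lam x 0)); rewrite -lam_add !addr0. Qed.

Lemma lamN (x y : B) : lam x (- y) = - lam x y.
Proof. by apply: (addrI (lam x y)); rewrite -lam_add !subrr lamx0. Qed.

Lemma lamNK (x z : B) : lam (- x) (lam x z) = z.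
Proof. by rewrite -lam_hom addNr lam0. Qed.

Lemma lamKN (x z : B) : lam x (lam (- x) z) = z.
Proof. by rewrite -lam_hom subrr lam0. Qed.

Lemma lam_mulA : associative lam_mul.
Proof. by move=> x y z; rewrite /lam_mul lam_hom lam_cond lam_add !addrA. Qed.

Lemma lam_mul1l : left_id 0 lam_mul.
Proof. by move=> a; rewrite /lam_mul lam0 add0r. Qed.

Lemma lam_mul1r : right_id 0 lam_mul.
Proof. by move=> a; rewrite /lam_mul lamx0 addr0. Qed.

Lemma lam_mul_inv (a : B) :
  lam_mul a (- lam (- a) a) = 0 /\ lam_mul (- lam (- a) a) a = 0.
Proof.
split; first by rewrite /lam_mul lamN lamKN subrr.
have lam_inv : lam (- lam (- a) a) = lam (- a) by rewrite -lamN lam_cond.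
by rewrite /lam_mul lam_inv addNr.
Qed.

Lemma lam_mul_group : is_group_op lam_mul.
Proof.
split; first exact: lam_mulA.
exists 0; split; first exact: lam_mul1l.
split; first exact: lam_mul1r.
by move=> a; exists (- lam (- a) a); exact: lam_mul_inv.
Qed.

Lemma lam_mul_brace : left_brace lam_mul.
Proof.
split; first exact: lam_mul_group.
by move=> a b c; rewrite /lam_mul lam_add [a + lam a b]addrC addrK addrCA.
Qed.

Lemma lam_star (a b : B) : brace_star lam_mul a b = lam a b - b.
Proof. by rewrite /brace_star /lam_mul addKr. Qed.

Lemma lam_star_trivial (a b z : B) : lam (brace_star lam_mul a b) z = z.
Proof. by rewrite lam_star lam_hom lam_cond lamKN. Qed.

Lemma lam_pow2_trivial (l : B) :
  brace_pow lam_mul 2 l -> forall z, lam l z = z.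
Proof.
apply: (@add_span_min _ _ (fun l => forall z, lam l z = z)) => //.
- exact: lam0.
- by move=> x y Hx Hy z; rewrite lam_hom Hx -[in LHS](Hy z) lamNK.
- by move=> x [a [b [_ [_ ->]]]] z; exact: lam_star_trivial.
Qed.

Lemma lam_pow3_trivial (z : B) : brace_pow lam_mul 3 z -> z = 0.
Proof.
apply: (@add_span_min _ _ (fun z => z = 0)) => //.
- by move=> x y -> ->; rewrite subrr.
- move=> x [l [m [Hl [_ ->]]]].
  by rewrite lam_star (lam_pow2_trivial _ Hl) subrr.
Qed.

End LambdaBrace.

Theorem theoremA (B : zmodType) (lam : B -> B -> B)
  (lam_add : forall x y z : B, lam x (y + z) = lam x y + lam x z)
  (lam_bij : forall x : B, bijective (lam x))
  (lam_hom : forall x y z : B, lam (x + y) z = lam x (lam y z))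
  (lam_cond : forall x y : B, lam (lam y x) = lam x) :
  left_brace (fun x y : B => x + lam x y) /\
  (forall z : B, brace_pow (fun x y : B => x + lam x y) 3 z -> z = 0).
Proof.
split.
- exact: (@lam_mul_brace B lam lam_add lam_bij lam_hom lam_cond).
- exact: (@lam_pow3_trivial B lam lam_bij lam_hom lam_cond).
Qed.
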